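(* Let $L$ be a pretransitive logic. (1) For every formula $\varphi$: $L[1]\vdash\varphi$ iff $L\vdash\Diamond^*\Box^*\varphi$. (2) If $L$ is decidable, then so is $L[1]$. (3) If $L$ has the finite model property, then so does $L[1]$.
   Context: Logics are normal $n$-modal logics. $\Diamond^0\varphi=\varphi$, $\Diamond^{i+1}\varphi=\Diamond^i(\bigvee_{j<n}\Diamond_j\varphi)$, $\Diamond^{\le m}\varphi=\bigvee_{i\le m}\Diamond^i\varphi$. $L$ is pretransitive if $L\vdash\Diamond^{m+1}p\to\Diamond^{\le m}p$ for some $m$; for the least such $m$, $\Diamond^*=\Diamond^{\le m}$ and $\Box^*=\neg\Diamond^*\neg$. $L[1]$ is the smallest logic containing $L\cup\{p_1\to\Box^*\Diamond^*p_1\}$. A logic has the finite model property if it is the set of formulas valid in some class of finite Kripke frames (equivalently, each non-theorem is refuted in a finite frame validating the logic). *)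

From mathcomp Require Import all_boot.
Set Implicit Arguments. Unset Strict Implicit. Unset Printing Implicit Defensive.

Inductive form (n : nat) : Type :=
| Var of nat
| Bot
| Imp of form n & form n
| Box of 'I_n & form n.

Arguments Var {n}. Arguments Bot {n}.

Section Derived.
Variable n : nat.
Definition Neg (a : form n) : form n := Imp a Bot.
Definition Top : form n := Neg Bot.
Definition Or (a b : form n) : form n := Imp (Neg a) b.
Definition Dia (i : 'I_n) (a : form n) : form n := Neg (Box i (Neg a)).

Definition DiaAll (a : form n) : form n :=
  foldr (fun j acc => Or (Dia j a) acc) Bot (enum 'I_n).

Fixpoint DiaIter (i : nat) (a : form n) : form n :=
  match i with
  | 0 => a
  | i'.+1 => DiaIter i' (DiaAll a)
  end.

Fixpoint DiaLe (m : nat) (a : form n) : form n :=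
  match m with
  | 0 => DiaIter 0 a
  | m'.+1 => Or (DiaLe m' a) (DiaIter m'.+1 a)
  end.

Definition BoxLe (m : nat) (a : form n) : form n := Neg (DiaLe m (Neg a)).

Fixpoint subst (s : nat -> form n) (a : form n) : form n :=
  match a with
  | Var k => s k
  | Bot => Bot
  | Imp a b => Imp (subst s a) (subst s b)
  | Box i a => Box i (subst s a)
  end.

Record normal (L : form n -> Prop) : Prop := {
  nl_ax1 : forall a b, L (Imp a (Imp b a));
  nl_ax2 : forall a b c, L (Imp (Imp a (Imp b c)) (Imp (Imp a b) (Imp a c)));
  nl_ax3 : forall a, L (Imp (Neg (Neg a)) a);
  nl_K   : forall i a b, L (Imp (Box i (Imp a b)) (Imp (Box i a) (Box i b)));
  nl_MP  : forall a b, L (Imp a b) -> L a -> L b;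
  nl_Nec : forall i a, L a -> L (Box i a);
  nl_Sub : forall s a, L a -> L (subst s a)
}.

Definition pretrans_index (L : form n -> Prop) (m : nat) : Prop :=
  L (Imp (DiaIter m.+1 (Var 0)) (DiaLe m (Var 0))).

Definition pretransitive (L : form n -> Prop) : Prop :=
  exists m, pretrans_index L m.

(* m is the least pretransitivity index of L; then \Diamond^* = DiaLe m,
   \Box^* = BoxLe m *)
Definition least_pretrans_index (L : form n -> Prop) (m : nat) : Prop :=
  pretrans_index L m /\ (forall k, pretrans_index L k -> m <= k).

Definition L1 (L : form n -> Prop) (m : nat) (a : form n) : Prop :=
  forall L' : form n -> Prop, normal L' ->
    (forall b, L b -> L' b) ->
    L' (Imp (Var 1) (BoxLe m (DiaLe m (Var 1)))) ->
    L' a.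

Fixpoint sat (W : Type) (R : 'I_n -> W -> W -> Prop) (V : nat -> W -> Prop)
    (w : W) (a : form n) : Prop :=
  match a with
  | Var k => V k w
  | Bot => False
  | Imp a b => sat R V w a -> sat R V w b
  | Box i a => forall v, R i w v -> sat R V v a
  end.

Definition frame_valid (W : Type) (R : 'I_n -> W -> W -> Prop) (a : form n) : Prop :=
  forall V w, sat R V w a.

Definition fmp (L : form n -> Prop) : Prop :=
  exists C : forall W : finType, ('I_n -> W -> W -> Prop) -> Prop,
    forall a, L a <-> (forall (W : finType) (R : 'I_n -> W -> W -> Prop),
                         C W R -> frame_valid R a).

Definition decides (L : form n -> Prop) (dec : form n -> bool) : Prop :=
  forall a, L a <-> dec a = true.

End Derived.

(* In any model of a pretransitive logic, [DiaLe m] and [BoxLe m] are the diamond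
   and box of the reflexive-transitive closure [reach] of the accessibility relations.
   Call a point final when every point it reaches reaches it back; the axiom
   [p -> BoxLe m (DiaLe m p)] holds throughout the part of a model above a final point.
   If [L |- DiaLe m (BoxLe m a)], substituting [Neg a] in the axiom gives [L[1] |- a].
   Conversely, the formulas whose substitution instances hold at every final point of
   the canonical model of [L] form a normal logic containing [L] and the axiom, hence
   [L[1]]; as every point of the canonical model sees a final point (Zorn's lemma),
   each of its theorems [a] satisfies [L |- DiaLe m (BoxLe m a)]. Decidability then
   transfers directly, and the finite model property because in a finite frame of [L]
   every point reaches a final point, whose generated subframe validates [L[1]]. *)

From mathcomp Require Import all_boot boolp classical_sets.
Set Implicit Arguments. Unset Strict Implicit. Unset Printing Implicit Defensive.
Local Open Scope classical_set_scope.

Section Derivations.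
Variables (n : nat) (L : form n -> Prop).
Hypothesis HL : normal L.

Inductive der (G : set (form n)) : form n -> Prop :=
| der_hyp a : G a -> der G a
| der_thm a : L a -> der G a
| der_mp a b : der G (Imp a b) -> der G a -> der G b.

Lemma der_sub G H a : G `<=` H -> der G a -> der H a.
Proof.
move=> GH; elim=> {a} [a /GH|a|a b _ IHab _ IHa]; first exact: der_hyp.
  exact: der_thm.
exact: der_mp IHab IHa.
Qed.

Lemma der_L a : der set0 a -> L a.
Proof. by elim=> {a} [a []|a|a b _ Hab _ Ha] //; exact: (nl_MP HL Hab Ha). Qed.

Lemma L_Imp_refl a : L (Imp a a).
Proof.
have H := nl_MP HL (nl_ax2 HL a (Imp a a) a) (nl_ax1 HL a (Imp a a)).
exact: (nl_MP HL H (nl_ax1 HL a a)).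
Qed.

Lemma der_deduction G h a : der (h |` G) a -> der G (Imp h a).
Proof.
elim=> {a} [a [->|Ga]|a La|a b _ IHab _ IHa].
- exact/der_thm/L_Imp_refl.
- exact: der_mp (der_thm _ (nl_ax1 HL _ _)) (der_hyp Ga).
- exact: der_mp (der_thm _ (nl_ax1 HL _ _)) (der_thm _ La).
- exact: der_mp (der_mp (der_thm _ (nl_ax2 HL _ _ _)) IHab) IHa.
Qed.

Lemma der_dne G a : der G (Neg (Neg a)) -> der G a.
Proof. exact: der_mp (der_thm _ (nl_ax3 HL a)). Qed.

Lemma der_efq G a : der G Bot -> der G a.
Proof. by move=> H; apply/der_dne/(der_mp (der_thm _ (nl_ax1 HL Bot _)) H). Qed.

Lemma der_bigcup G (F : set (set (form n))) a : total_on F subset ->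
  der (G `|` \bigcup_(X in F) X) a -> der G a \/ exists2 X, F X & der (G `|` X) a.
Proof.
move=> Ftot; elim=> {a} [a [Ga|[X FX Xa]]|a La|a b _ IHab _ IHa].
- by left; apply: der_hyp.
- by right; exists X => //; apply: der_hyp; right.
- by left; apply: der_thm.
case: IHab => [dab|[X FX dab]]; case: IHa => [da|[Y FY da]].
- by left; apply: der_mp dab da.
- by right; exists Y => //; apply: der_mp (der_sub (@subsetUl _ _ _) dab) da.
- by right; exists X => //; apply: der_mp dab (der_sub (@subsetUl _ _ _) da).
case: (Ftot X Y FX FY) => [/(@setUS _ G) XY|/(@setUS _ G) YX].
  by right; exists Y => //; apply: der_mp (der_sub XY dab) da.
by right; exists X => //; apply: der_mp dab (der_sub YX da).
Qed.

Definition consistent (G : set (form n)) := ~ der G Bot.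

Definition mcs (x : set (form n)) := consistent x /\ forall a, x a \/ x (Neg a).

Lemma lindenbaum G : consistent G -> exists2 x, mcs x & G `<=` x.
Proof.
move=> cG.
have [|A [cA Amax]] := @Zorn_bigcup _ (fun X => consistent (G `|` X)).
  move=> F FP Ftot /(der_bigcup Ftot) [//|[X FX]]; exact: FP X FX.
have der_neg b : ~ A b -> der (G `|` A) (Neg b).
  move=> Ab; apply: der_deduction; apply: contrapT => nd.
  apply: (Amax (b |` A)); first by split=> [|bA]; [exact: subsetUr|apply/Ab/bA; left].
  by rewrite /consistent setUCA.
exists (G `|` A); last exact: subsetUl.
split=> // a; case: (pselect (A a)) => [Aa|/der_neg da]; first by left; right.
case: (pselect (A (Neg a))) => [Aa|/der_neg dna]; first by right; right.
by case: cA; apply: der_mp dna da.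
Qed.

Section MaximalConsistent.
Variable x : set (form n).
Hypothesis xm : mcs x.

Lemma mcs_der a : der x a -> x a.
Proof.
case: xm => cx xt da; case: (xt a) => // xna.
by case: cx; apply: der_mp (der_hyp xna) da.
Qed.

Lemma mcs_L a : L a -> x a.
Proof. by move=> La; apply: mcs_der; apply: der_thm. Qed.

Lemma mcs_Bot : ~ x Bot.
Proof. by case: xm => cx _ xB; case: cx; apply: der_hyp. Qed.

Lemma mcs_Imp a b : x (Imp a b) <-> (x a -> x b).
Proof.
split=> [xab xa|xab]; first exact: mcs_der (der_mp (der_hyp xab) (der_hyp xa)).
case: (proj2 xm a) => [/xab xb|xna].
  exact: mcs_der (der_mp (der_thm _ (nl_ax1 HL b a)) (der_hyp xb)).
apply/mcs_der/der_deduction/der_efq.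
by apply: (der_mp (a := a)); apply: der_hyp; [right|left].
Qed.

Lemma mcs_Neg a : x (Neg a) <-> ~ x a.
Proof. by rewrite mcs_Imp; split=> [xna /xna /mcs_Bot|]. Qed.

Lemma mcs_Box_der i G a : (forall c, G c -> x (Box i c)) -> der G a -> x (Box i a).
Proof.
move=> Gx; elim=> {a} [a /Gx //|a La|a b _ IHab _ IHa].
  exact/mcs_L/(nl_Nec HL).
have := mcs_L (nl_K HL i a b).
by move=> /mcs_Imp/(_ IHab)/mcs_Imp; apply.
Qed.

End MaximalConsistent.

Lemma mcs_Box_witness x i a : mcs x -> ~ x (Box i a) ->
  exists w, [/\ mcs w, forall c, x (Box i c) -> w c & ~ w a].
Proof.
move=> xm xa; have [|w wm sw] := @lindenbaum (Neg a |` [set c | x (Box i c)]).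
  by move=> /der_deduction/der_dne d; apply/xa/(mcs_Box_der xm _ d).
exists w; split=> // [c xc|wa]; first by apply: sw; right.
by apply: (proj1 (mcs_Neg wm a)) wa; apply: sw; left.
Qed.

Lemma nontheorem_mcs a : ~ L a -> exists2 x, mcs x & x (Neg a).
Proof.
move=> La; have [|x xm sx] := @lindenbaum [set Neg a]; last by exists x; [|apply: sx].
move=> d; apply/La/der_L/der_dne/der_deduction.
by apply: der_sub d => c ->; left.
Qed.

End Derivations.

Section Substitution.
Variable n : nat.

Lemma subst_DiaAll (s : nat -> form n) a : subst s (DiaAll a) = DiaAll (subst s a).
Proof. by rewrite /DiaAll; elim: (enum 'I_n) => //= j js ->. Qed.

Lemma subst_DiaIter (s : nat -> form n) k a : subst s (DiaIter k a) = DiaIter k (subst s a).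
Proof. by elim: k a => //= k IH a; rewrite IH subst_DiaAll. Qed.

Lemma subst_DiaLe (s : nat -> form n) m a : subst s (DiaLe m a) = DiaLe m (subst s a).
Proof.
elim: m => [|m IH]; first exact: subst_DiaIter.
by rewrite /DiaLe -/(DiaLe m a) -/(DiaLe m (subst s a)) /Or /Neg /= IH (subst_DiaIter s m.+1).
Qed.

Lemma subst_BoxLe (s : nat -> form n) m a : subst s (BoxLe m a) = BoxLe m (subst s a).
Proof. by rewrite /= subst_DiaLe. Qed.

Lemma subst_Var (a : form n) : subst Var a = a.
Proof. by elim: a => //= [a -> b ->|i a ->]. Qed.

Lemma subst_comp (s t : nat -> form n) a :
  subst s (subst t a) = subst (fun k => subst s (t k)) a.
Proof. by elim: a => //= [a -> b ->|i a ->]. Qed.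

Lemma pretrans_instance (L : form n -> Prop) m a : normal L -> pretrans_index L m ->
  L (Imp (DiaIter m.+1 a) (DiaLe m a)).
Proof.
move=> HL /(nl_Sub HL (fun=> a)).
by rewrite /= subst_DiaIter subst_DiaAll subst_DiaLe.
Qed.

Definition L1_axiom m : form n := Imp (Var 1) (BoxLe m (DiaLe m (Var 1))).

Lemma subst_L1_axiom (s : nat -> form n) m :
  subst s (L1_axiom m) = Imp (s 1) (BoxLe m (DiaLe m (s 1))).
Proof. by rewrite -(subst_DiaLe s m (Var 1)) -subst_BoxLe. Qed.

End Substitution.

Arguments L1_axiom {n} m.

Section Semantics.
Variables (n : nat) (W : Type) (R : 'I_n -> W -> W -> Prop).

Fixpoint steps k (w v : W) : Prop :=
  match k with
  | 0 => w = v
  | k.+1 => exists2 u, steps k w u & exists i, R i u v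
  end.

Definition reach (w v : W) := exists k, steps k w v.

Lemma steps_add j k w v : steps (j + k) w v <-> exists2 u, steps j w u & steps k u v.
Proof.
elim: k v => [|k IH] v; first by rewrite addn0; split=> [wv|[u wu <-//]]; exists v.
rewrite addnS; split=> [[u /IH [x wx xu] uv]|[x wx [u xu uv]]].
  by exists x => //; exists u.
by exists u => //; apply/IH; exists x.
Qed.

Lemma reach_refl w : reach w w.
Proof. by exists 0. Qed.

Lemma reach_trans u w v : reach w u -> reach u v -> reach w v.
Proof. by move=> [j wu] [k uv]; exists (j + k); apply/steps_add; exists u. Qed.

Lemma reach_rel i w v : R i w v -> reach w v.
Proof. by move=> wv; exists 1; exists w => //; exists i. Qed.

Variable V : nat -> W -> Prop.

Lemma sat_Or w a b : sat R V w (Or a b) <-> sat R V w a \/ sat R V w b.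
Proof. by rewrite /=; case: (pselect (sat R V w a)); tauto. Qed.

Lemma sat_Dia w i a : sat R V w (Dia i a) <-> exists2 v, R i w v & sat R V v a.
Proof.
split=> [wa|[v wv va] wna]; last exact: wna _ wv va.
by apply: contrapT => nv; apply: wa => v wv va; apply: nv; exists v.
Qed.

Lemma sat_DiaAll w a : sat R V w (DiaAll a) <-> exists i, exists2 v, R i w v & sat R V v a.
Proof.
suff -> : sat R V w (DiaAll a) <->
    exists2 i, i \in enum 'I_n & exists2 v, R i w v & sat R V v a.
  by split=> [[i _ ?]|[i ?]]; exists i; rewrite ?mem_enum.
rewrite /DiaAll; elim: (enum 'I_n) => [|j js IH]; first by split=> // [[]].
rewrite [foldr _ _ (_ :: _)]/= sat_Or IH sat_Dia; split=> [[[v wv va]|[i ij wi]]|[i]].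
- by exists j; [rewrite inE eqxx|exists v].
- by exists i; rewrite // inE ij orbT.
by rewrite inE => /orP [/eqP ->|ij] wi; [left|right; exists i].
Qed.

Lemma sat_DiaIter k w a : sat R V w (DiaIter k a) <-> exists2 v, steps k w v & sat R V v a.
Proof.
elim: k a => [|k IH] a; first by split=> [wa|[v <-]]; first exists w.
rewrite /= IH; split=> [[u wu /sat_DiaAll [i [v uv va]]]|[v [u wu [i uv]] va]].
  by exists v => //; exists u => //; exists i.
by exists u => //; apply/sat_DiaAll; exists i; exists v.
Qed.

Lemma sat_DiaLe_steps m w a :
  sat R V w (DiaLe m a) <-> exists2 k, k <= m & exists2 v, steps k w v & sat R V v a.
Proof.
elim: m => [|m IH]; first by rewrite sat_DiaIter; split=> [wa|[[] // _]]; exists 0.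
rewrite -/(Or _ _) sat_Or IH sat_DiaIter.
split=> [[[k km wk]|wk]|[k]]; first by exists k => //; apply: leqW.
  by exists m.+1.
by rewrite leq_eqVlt => /orP [/eqP ->|km] wk; [right|left; exists k].
Qed.

Section Pretransitive.
Variable m : nat.
Hypothesis pretrans : forall w a, sat R V w (Imp (DiaIter m.+1 a) (DiaLe m a)).

(* A walk longer than [m] is shortened by the pretransitivity axiom applied [m.+1]
   steps before its end. *)
Lemma sat_DiaLe w a : sat R V w (DiaLe m a) <-> exists2 v, reach w v & sat R V v a.
Proof.
split=> [/sat_DiaLe_steps [k _ [v wv va]]|[v [k wv] va]]; first by exists v => //; exists k.
elim/ltn_ind: k w v wv va => k IH w v wv va.
case: (leqP k m) => [km|mk]; first by apply/sat_DiaLe_steps; exists k => //; exists v.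
have Ek : k = (k - m.+1) + m.+1 by rewrite subnK.
move: wv; rewrite Ek => /steps_add [u wu uv].
have /sat_DiaLe_steps [j jm [v' uv' v'a]] : sat R V u (DiaLe m a).
  by apply: pretrans; apply/sat_DiaIter; exists v.
apply: (IH (k - m.+1 + j) _ w v') => //; last by apply/steps_add; exists u.
by rewrite [X in _ < X]Ek ltn_add2l ltnS.
Qed.

Lemma sat_BoxLe w a : sat R V w (BoxLe m a) <-> forall v, reach w v -> sat R V v a.
Proof.
rewrite [sat _ _ _ (BoxLe _ _)]/= sat_DiaLe.
split=> [wa v wv|wa [v wv va]]; last exact/va/wa.
by apply: contrapT => va; apply: wa; exists v.
Qed.

End Pretransitive.
End Semantics.

Section Canonical.
Variables (n : nat) (L : form n -> Prop).
Hypothesis HL : normal L.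

Record cworld := CWorld { theory :> form n -> Prop; theory_mcs : mcs L theory }.

Definition crel (i : 'I_n) (z w : cworld) := forall c, z (Box i c) -> w c.

Definition cval k (z : cworld) := z (Var k).

Lemma canonical_Box (z : cworld) i a :
  z (Box i a) <-> forall w : cworld, crel i z w -> w a.
Proof.
split=> [za w /(_ a za) //|wa]; apply: contrapT => /(mcs_Box_witness HL (theory_mcs z)).
by move=> [w [wm zw]]; apply; apply: (wa (CWorld wm)).
Qed.

Lemma truth_lemma (z : cworld) a : sat crel cval z a <-> z a.
Proof.
elim: a z => [k||a IHa b IHb|i a IH] z //=.
- by split=> //; apply: mcs_Bot (theory_mcs z).
- by rewrite (mcs_Imp HL (theory_mcs z)) IHa IHb.
rewrite (canonical_Box z); split=> za w /za; by rewrite IH.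
Qed.

Variable m : nat.
Hypothesis Hm : pretrans_index L m.

Lemma canonical_pretrans (z : cworld) a : sat crel cval z (Imp (DiaIter m.+1 a) (DiaLe m a)).
Proof. by apply/truth_lemma; apply: (mcs_L (theory_mcs z)); apply: pretrans_instance. Qed.

Lemma canonical_DiaLe (z : cworld) a : z (DiaLe m a) <-> exists2 w, reach crel z w & w a.
Proof.
rewrite -truth_lemma (sat_DiaLe canonical_pretrans).
by split=> [[w ? /truth_lemma]|[w ? /truth_lemma]]; exists w.
Qed.

Lemma canonical_BoxLe (z : cworld) a : z (BoxLe m a) <-> forall w, reach crel z w -> w a.
Proof.
rewrite -truth_lemma (sat_BoxLe canonical_pretrans).
by split=> za w /za /truth_lemma.
Qed.

Lemma canonical_not_DiaLe (z : cworld) a : ~ z (DiaLe m a) -> z (BoxLe m (Neg a)).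
Proof.
move=> za; apply/canonical_BoxLe => w zw; apply/(mcs_Neg HL (theory_mcs w)) => wa.
by apply: za; apply/canonical_DiaLe; exists w.
Qed.

(* The canonical relation of [BoxLe m]. It contains [reach crel] and, unlike it,
   admits upper bounds of chains by Lindenbaum's lemma (see [exists_cfinal]). *)
Definition csuc (z w : cworld) := forall a, z (BoxLe m a) -> w a.

Lemma reach_csuc z w : reach crel z w -> csuc z w.
Proof. by move=> zw a /canonical_BoxLe; apply. Qed.

Lemma csuc_refl z : csuc z z.
Proof. exact/reach_csuc/reach_refl. Qed.

Lemma csuc_BoxLe z w a : csuc z w -> z (BoxLe m a) -> w (BoxLe m a).
Proof.
move=> zw za; apply: zw; apply/canonical_BoxLe => v zv.
by apply/canonical_BoxLe => u vu; move/canonical_BoxLe: za; apply; apply: reach_trans vu.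
Qed.

Lemma csuc_trans u z w : csuc z u -> csuc u w -> csuc z w.
Proof. by move=> zu uw a /(csuc_BoxLe zu) /uw. Qed.

Lemma csuc_witness (z : cworld) a : ~ z (BoxLe m a) -> exists2 w, csuc z w & ~ w a.
Proof.
move=> za; apply: contrapT => nw; apply/za/canonical_BoxLe => w /reach_csuc zw.
by apply: contrapT => wa; apply: nw; exists w.
Qed.

Definition cfinal z := forall w, csuc z w -> csuc w z.

Lemma cfinal_csuc z w : cfinal z -> csuc z w -> cfinal w.
Proof. by move=> Fz zw v wv; apply: csuc_trans (Fz v (csuc_trans zw wv)) zw. Qed.

Definition boxed (z : cworld) : set (form n) := [set a | z (BoxLe m a)].

Lemma boxed_sub z : boxed z `<=` z.
Proof. exact: csuc_refl. Qed.

Lemma consistent_boxed_chain x (A : set cworld) : (forall t, A t -> csuc x t) ->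
  total_on A csuc -> consistent L (boxed x `|` \bigcup_(X in boxed @` A) X).
Proof.
move=> xA Atot /der_bigcup [|d|[_ [t At <-] d]].
- move=> _ _ [s As <-] [t At <-].
  by case: (Atot s t As At) => st; [left|right] => a /(csuc_BoxLe st).
- by case: (theory_mcs x) => + _; apply; apply: der_sub d; apply: boxed_sub.
case: (theory_mcs t) => + _; apply; apply: der_sub d.
by move=> a [/(csuc_BoxLe (xA t At))|]; apply: boxed_sub.
Qed.

Lemma exists_cfinal x : exists2 y, csuc x y & cfinal y.
Proof.
pose T := {y : cworld | csuc x y}.
have [||A Atot|t tmax] :=
  @ZL_preorder T (exist _ x (csuc_refl (z := x))) (fun s t => `[< csuc (sval s) (sval t) >]).
- by move=> t; apply/asboolP/csuc_refl.
- by move=> r s t /asboolP rs /asboolP st; apply/asboolP/(csuc_trans rs st).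
- have cU : consistent L (boxed x `|` \bigcup_(X in boxed @` (sval @` A)) X).
    apply: consistent_boxed_chain => [_ [t _ <-]|_ _ [s As <-] [t At <-]].
      exact: svalP.
    by case: (Atot s t As At) => /asboolP st; [left|right].
  have [y ym yU] := lindenbaum HL cU.
  have xy : csuc x (CWorld ym) by move=> a xa; apply: yU; left.
  exists (exist _ (CWorld ym) xy) => s As; apply/asboolP => a sa.
  by apply: yU; right; exists (boxed (sval s)) => //; exists (sval s) => //; exists s.
exists (sval t); first exact: svalP.
move=> w tw; have /asboolP // := tmax (exist _ w (csuc_trans (svalP t) tw)) (asboolT tw).
Qed.

Definition final_theory (a : form n) :=
  forall s (z : cworld), cfinal z -> z (subst s a).

Lemma final_theory_L a : L a -> final_theory a.
Proof. by move=> La s z _; apply: (mcs_L (theory_mcs z)); apply: nl_Sub. Qed.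

Lemma final_theory_normal : normal final_theory.
Proof.
split.
- by move=> a b; apply/final_theory_L/(nl_ax1 HL).
- by move=> a b c; apply/final_theory_L/(nl_ax2 HL).
- by move=> a; apply/final_theory_L/(nl_ax3 HL).
- by move=> i a b; apply/final_theory_L/(nl_K HL).
- move=> a b Hab Ha s z Fz.
  by apply: (mcs_Imp HL (theory_mcs z) _ _).1 (Ha s z Fz); apply: Hab.
- move=> i a Ha s z Fz; apply/canonical_Box => w zw.
  apply: Ha (cfinal_csuc Fz _); apply/reach_csuc/reach_rel/zw.
- by move=> t a Ha s z Fz; rewrite subst_comp; apply: Ha.
Qed.

Lemma final_theory_ax : final_theory (L1_axiom m).
Proof.
move=> s z Fz; rewrite subst_L1_axiom.
apply/(mcs_Imp HL (theory_mcs z)) => za; apply: contrapT => /csuc_witness [w zw wn].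
have /(Fz w zw _) := canonical_not_DiaLe wn.
by move/(mcs_Neg HL (theory_mcs z)).
Qed.

Lemma final_theory_DiaLe_BoxLe a : final_theory a -> L (DiaLe m (BoxLe m a)).
Proof.
move=> Ha; apply: contrapT => /(nontheorem_mcs HL) [x xm xa].
have [y xy Fy] := exists_cfinal (CWorld xm).
have ya : y (BoxLe m a).
  apply: contrapT => /csuc_witness [w yw]; apply.
  by have := Ha Var w (cfinal_csuc Fy yw); rewrite subst_Var.
have /(xy _) := canonical_not_DiaLe (z := CWorld xm) (proj1 (mcs_Neg HL xm _) xa).
by move/(mcs_Neg HL (theory_mcs y)).
Qed.

End Canonical.

Lemma normal_contra n (L : form n -> Prop) a b : normal L ->
  L (Imp (Neg a) (Neg b)) -> L b -> L a.
Proof.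
move=> HL ab Lb; apply/(der_L HL)/(der_dne HL)/(der_deduction HL).
apply: (der_mp (a := b)); last exact: der_thm.
by apply: (der_mp (a := Neg a)); [apply: der_thm | apply: der_hyp; left].
Qed.

Lemma L1_DiaLe_BoxLe n (L : form n -> Prop) m a : normal L -> pretrans_index L m ->
  L1 L m a <-> L (DiaLe m (BoxLe m a)).
Proof.
move=> HL Hm; split=> [La|Ha L' HL' LL' ax].
  apply: (final_theory_DiaLe_BoxLe HL Hm).
  exact: La _ (final_theory_normal HL Hm) (@final_theory_L _ _ HL m) (final_theory_ax HL Hm).
apply: (normal_contra HL' _ (LL' _ Ha)).
by have := nl_Sub HL' (fun=> Neg a) ax; rewrite (subst_L1_axiom _ m).
Qed.

Section Validity.
Variables (n : nat) (W : Type) (R : 'I_n -> W -> W -> Prop).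

Lemma sat_subst V s w a :
  sat R V w (subst s a) <-> sat R (fun k v => sat R V v (s k)) w a.
Proof.
elim: a w => [k||a IHa b IHb|i a IH] w //=; first by rewrite IHa IHb.
by split=> wa v /wa /IH.
Qed.

Lemma frame_valid_normal : normal (frame_valid R).
Proof.
split.
- by move=> a b V w /=.
- by move=> a b c V w /=; tauto.
- by move=> a V w /=; case: (pselect (sat R V w a)); tauto.
- by move=> i a b V w /= wab wa v wv; apply: wab wv (wa v wv).
- by move=> a b vab va V w; apply: vab (va V w).
- by move=> i a va V w v _; apply: va.
- by move=> s a va V w; apply/sat_subst.
Qed.

Variable P : pred W.
Hypothesis P_closed : forall i u v, P u -> R i u v -> P v.

Definition gworld := {w : W | P w}.

Definition grel i (c d : gworld) := R i (val c) (val d).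

Lemma sat_generated (V : nat -> W -> Prop) (U : nat -> gworld -> Prop) :
  (forall k c, U k c <-> V k (val c)) -> forall c a, sat grel U c a <-> sat R V (val c) a.
Proof.
move=> UV c a; elim: a c => [k||a IHa b IHb|i a IH] c //=; first by rewrite IHa IHb.
split=> ca v; last by move=> cv; apply/IH/ca.
by move=> cv; apply: (IH (exist _ v (P_closed (valP c) cv))).1; apply: ca.
Qed.

Lemma generated_validE a : frame_valid grel a <-> forall V (c : gworld), sat R V (val c) a.
Proof.
split=> [va V c|va U c]; first by apply/(@sat_generated V (fun k d => V k (val d))).
pose V k w := exists2 d : gworld, val d = w & U k d.
apply/(@sat_generated V) => [k d|]; last exact: va.
by split=> [Ud|[d' /val_inj -> //]]; exists d.
Qed.

End Validity.

Arguments grel {n W} R P i c d.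

Section FinalPoints.
Variables (n : nat) (W : Type) (R : 'I_n -> W -> W -> Prop).

Definition final_point (y : W) := forall z, reach R y z -> reach R z y.

Definition above (y : W) : pred W := fun v => `[< reach R y v >].

Lemma above_closed y i u v : above y u -> R i u v -> above y v.
Proof. by move=> /asboolP yu uv; apply/asboolP; apply: reach_trans yu (reach_rel uv). Qed.

(* Above a final point every point reaches every other one. *)
Lemma final_above_L1_axiom m y :
  (forall V w a, sat R V w (Imp (DiaIter m.+1 a) (DiaLe m a))) -> final_point y ->
  frame_valid (grel R (above y)) (L1_axiom m).
Proof.
move=> pt Fy; apply/generated_validE; first exact: above_closed.
move=> V c Vc; apply/(sat_BoxLe (pt V)) => v cv; apply/(sat_DiaLe (pt V)).
have yc : reach R y (val c) := asboolW (valP c).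
by exists (val c) => //; apply: reach_trans (Fy v (reach_trans yc cv)) yc.
Qed.

End FinalPoints.

(* A point reachable from [w] whose cone of successors has least cardinality is final. *)
Lemma exists_final_point n (W : finType) (R : 'I_n -> W -> W -> Prop) w :
  exists2 y, reach R w y & final_point R y.
Proof.
pose cone u := finset (above R u).
have [|y /asboolP wy ymin] := @arg_minnP _ w (above R w) (fun u => #|cone u|).
  exact/asboolP/reach_refl.
exists y => // z yz.
have sub : cone z \subset cone y.
  by apply/fintype.subsetP => v; rewrite !inE; apply: reach_trans yz.
have /eqP eq_cone : cone z == cone y.
  by rewrite eqEcard sub ymin //; apply/asboolP; apply: reach_trans wy yz.
have : y \in cone z by rewrite eq_cone inE; apply/asboolP/reach_refl.
by rewrite inE => /asboolP.
Qed.

Lemma fmp_L1 n (L : form n -> Prop) m : normal L -> pretrans_index L m ->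
  fmp L -> fmp (L1 L m).
Proof.
move=> HL Hm [C HC].
exists (fun W R => (forall a, L a -> frame_valid R a) /\ frame_valid R (L1_axiom m)) => a.
split=> [La W R [LR axR]|va]; first exact: La _ (frame_valid_normal R) LR axR.
apply/(L1_DiaLe_BoxLe _ HL Hm)/HC => W R CR V w.
have LR b : L b -> frame_valid R b by move=> /HC; apply.
have pt V' u b : sat R V' u (Imp (DiaIter m.+1 b) (DiaLe m b)).
  exact: (LR _ (pretrans_instance _ HL Hm)).
have [y wy Fy] := exists_final_point R w.
apply/(sat_DiaLe (pt V)); exists y => //; apply/(sat_BoxLe (pt V)) => z yz.
have above_y := @above_closed _ _ R y.
have va' : frame_valid (grel R (above R y)) a.
  apply: va; split; last exact: final_above_L1_axiom.
  by move=> b /LR vb; apply/(generated_validE above_y) => V' c; apply: vb.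
exact: (generated_validE above_y a).1 va' V (exist _ z (asboolT yz)).
Qed.
Theorem theorem3p7 (n : nat) (L : form n -> Prop) (m : nat) :
  normal L -> pretransitive L -> least_pretrans_index L m ->
  (forall a : form n, L1 L m a <-> L (DiaLe m (BoxLe m a))) /\
  (forall dec : form n -> bool, decides L dec ->
     decides (L1 L m) (fun a => dec (DiaLe m (BoxLe m a)))) /\
  (fmp L -> fmp (L1 L m)).
Proof.
move=> HL _ [Hm _]; have L1E a := L1_DiaLe_BoxLe a HL Hm.
split=> //; split; last exact: fmp_L1.
by move=> dec Hdec a; rewrite L1E; apply: Hdec.
Qed.
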